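(* Let $k$ be an integer, $m$ a positive integer and $p$ a prime, and let $g_k(m)=\sum_{d>0,\,d^2\mid m}\mu(d)\sigma_{k-1}(m/d^2)$, where $\mu$ is the Möbius function and $\sigma_{k-1}(m)=\sum_{d>0,\,d\mid m}d^{k-1}$. Then $g_k(mp)=(p^{k-1}+1)g_k(m)$ if $p\nmid m$, and $g_k(mp)=p^{k-1}g_k(m)$ if $p\mid m$. *)

From mathcomp Require Import all_boot all_order all_algebra.
Set Implicit Arguments. Unset Strict Implicit. Unset Printing Implicit Defensive.
Import Order.TTheory GRing.Theory Num.Theory.
Local Open Scope ring_scope.

(* Moebius function: mu(n) = (-1)^r if n > 0 is a product of r distinct primes,
   0 otherwise (0 is assigned to n = 0, which never occurs below). *)
Definition moebius (n : nat) : int :=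
  if (0 < n)%N && all (fun p => logn p n == 1%N) (primes n)
  then (-1) ^+ size (primes n) else 0.

Definition sigma (s : int) (m : nat) : rat :=
  \sum_(1 <= d < m.+1 | (d %| m)%N) (d%:Q) ^ s.

Definition g (k : int) (m : nat) : rat :=
  \sum_(1 <= d < m.+1 | (d ^ 2 %| m)%N) (moebius d)%:~R * sigma (k - 1) (m %/ d ^ 2).

(* Writing m = p^a n with p not dividing n, the divisor sums defining sigma and
   g split into a p-part and an n-part, so g_k(p^a n) = h(a) g_k(n) with
   h(a) = sum_(2b <= a) mu(p^b) (1 + q + ... + q^(a-2b)) and q = p^(k-1).
   Only b = 0, 1 contribute, so h(0) = 1, h(1) = 1 + q and h(a) = q^a + q^(a-1)
   for a >= 2; hence h(a+1) = (q + 1) h(a) when a = 0 and h(a+1) = q h(a)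
   otherwise. *)
From mathcomp Require Import all_boot all_order all_algebra zify ring.
Set Implicit Arguments. Unset Strict Implicit. Unset Printing Implicit Defensive.
Import Order.TTheory GRing.Theory Num.Theory.
Local Open Scope ring_scope.

Lemma ndvdn_gt0 p n : ~~ (p %| n)%N -> (0 < n)%N.
Proof. by rewrite lt0n; apply: contraNneq => ->. Qed.

Lemma logn_pfactorM p b e : prime p -> ~~ (p %| e)%N -> logn p (p ^ b * e) = b.
Proof.
move=> pp pe; rewrite lognM ?(ndvdn_gt0 pe) ?expn_gt0 ?prime_gt0 //.
by rewrite pfactorK // logn_coprime ?addn0 // prime_coprime.
Qed.

Lemma divisors_pfactorM p a n : prime p -> ~~ (p %| n)%N ->
  perm_eq (divisors (p ^ a * n))
          [seq (p ^ b * e)%N | b <- iota 0 a.+1, e <- divisors n].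
Proof.
move=> pp pn; have n0 := ndvdn_gt0 pn; have p0 := prime_gt0 pp.
have M0 : (0 < p ^ a * n)%N by rewrite muln_gt0 expn_gt0 p0.
have coprime_dvd e : e \in divisors n -> ~~ (p %| e)%N.
  by rewrite -dvdn_divisors // => en; apply: contra pn => /dvdn_trans; apply.
apply: uniq_perm; first exact: divisors_uniq.
  apply: allpairs_uniq; [exact: iota_uniq | exact: divisors_uniq |].
  move=> x y /allpairsP[[b e] [_ en ->]] /allpairsP[[b' e'] [_ en' ->]] /= E.
  have bb' : b = b'.
    by rewrite -(logn_pfactorM b pp (coprime_dvd _ en)) E logn_pfactorM ?coprime_dvd.
  rewrite -bb' in E *; congr (_, _); apply/eqP.
  by rewrite -(@eqn_pmul2l (p ^ b)) ?expn_gt0 ?p0 ?E.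
move=> d; rewrite -dvdn_divisors //; apply/idP/allpairsP => [dM | [[b e] [bi en ->]]].
  have d0 := dvdn_gt0 M0 dM.
  exists (logn p d, (d`_p^')%N); split.
  - rewrite mem_iota add0n ltnS -(logn_pfactorM a pp pn); exact: dvdn_leq_log.
  - have cop : coprime (d`_p^')%N (p ^ a).
      by rewrite coprime_sym coprimeXl // prime_coprime // -p'natE // part_pnat.
    rewrite -dvdn_divisors // -(Gauss_dvdr _ cop); apply: dvdn_trans dM.
    by rewrite -{2}(partnC p d0) p_part dvdn_mull.
  - by rewrite -p_part partnC.
rewrite mem_iota add0n ltnS in bi; rewrite -dvdn_divisors // in en.
by rewrite dvdn_mul // dvdn_Pexp2l // prime_gt1.
Qed.

Section DivisorSum.

Variable R : nmodType.

Definition divisor_sum (M : nat) (F : nat -> R) : R :=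
  \sum_(1 <= d < M.+1 | (d %| M)%N) F d.

Lemma divisor_sumE M F : (0 < M)%N -> divisor_sum M F = \sum_(d <- divisors M) F d.
Proof.
move=> M0; rewrite /divisor_sum -big_filter; apply: perm_big.
apply: uniq_perm; [by rewrite filter_uniq // iota_uniq | exact: divisors_uniq |].
move=> d; rewrite mem_filter mem_iota -dvdn_divisors //.
by case dM: (d %| M)%N => //=; have := dvdn_leq M0 dM; have := dvdn_gt0 M0 dM; lia.
Qed.

Lemma divisor_sum_pfactorM p a n F : prime p -> ~~ (p %| n)%N ->
  divisor_sum (p ^ a * n) F =
  \sum_(b < a.+1) divisor_sum n (fun e => F (p ^ b * e)%N).
Proof.
move=> pp pn; have n0 := ndvdn_gt0 pn.
rewrite divisor_sumE ?muln_gt0 ?n0 ?expn_gt0 ?prime_gt0 //.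
rewrite (perm_big _ (divisors_pfactorM a pp pn)) big_allpairs_dep.
rewrite -[iota 0 a.+1]/(index_iota 0 a.+1) big_mkord; apply: eq_bigr => b _.
by rewrite divisor_sumE.
Qed.

End DivisorSum.

Lemma moebius_primeM p e : prime p -> ~~ (p %| e)%N -> moebius (p * e) = - moebius e.
Proof.
move=> pp pe; have e0 := ndvdn_gt0 pe.
have pnot : p \notin primes e by rewrite mem_primes pp e0.
have perm : perm_eq (primes (p * e)) (p :: primes e).
  apply: uniq_perm; [exact: primes_uniq | by rewrite /= pnot primes_uniq |].
  by move=> q; rewrite primesM ?e0 ?prime_gt0 // primes_prime // !inE.
rewrite /moebius muln_gt0 prime_gt0 // e0 /= (perm_size perm) (perm_all _ perm) /=.
rewrite lognM ?e0 ?prime_gt0 // logn_prime // eqxx logn_coprime ?prime_coprime //=.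
have -> : all (fun q => logn q (p * e) == 1%N) (primes e) =
          all (fun q => logn q e == 1%N) (primes e).
  apply: eq_in_all => q qe; rewrite lognM ?e0 ?prime_gt0 // logn_prime //.
  have qp : q != p by apply: contraNneq pnot => <-.
  by rewrite (negPf qp) add0n.
by case: all => //; rewrite exprS mulN1r.
Qed.

Lemma moebius_prime p : prime p -> moebius p = -1.
Proof. by move=> pp; rewrite -[p]muln1 moebius_primeM // dvdn1 neq_ltn prime_gt1 ?orbT. Qed.

Lemma moebius_sqr_dvd p n : prime p -> (0 < n)%N -> (p ^ 2 %| n)%N -> moebius n = 0.
Proof.
move=> pp n0 p2n; rewrite /moebius n0 /=.
case: allP => // /(_ p); rewrite mem_primes pp n0 (dvdn_trans _ p2n) ?dvdn_exp //.
have := dvdn_leq_log p n0 p2n; rewrite pfactorK // => le2 /(_ isT) /eqP; lia.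
Qed.

Lemma moebius_pfactorM p b e : prime p -> ~~ (p %| e)%N ->
  moebius (p ^ b * e) = moebius (p ^ b) * moebius e.
Proof.
move=> pp pe; have e0 := ndvdn_gt0 pe; case: b => [|[|b]].
- by rewrite expn0 mul1n mul1r.
- by rewrite expn1 moebius_primeM // (moebius_prime pp) mulN1r.
have sqr i : (0 < i)%N -> moebius (p ^ b.+2 * i) = 0.
  move=> i0; apply: (moebius_sqr_dvd pp); last by rewrite dvdn_mulr // dvdn_exp2l.
  by rewrite muln_gt0 i0 expn_gt0 prime_gt0.
by rewrite sqr // -[(p ^ b.+2)%N]muln1 sqr // mul0r.
Qed.

Section GeometricSum.

Variable R : pzSemiRingType.

Definition geom (q : R) (c : nat) : R := \sum_(b < c.+1) q ^+ b.

Lemma geom0 q : geom q 0 = 1.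
Proof. by rewrite /geom big_ord_recl big_ord0 addr0. Qed.

Lemma geomS q c : geom q c.+1 = 1 + q * geom q c.
Proof.
rewrite /geom big_ord_recl big_distrr; congr (_ + _).
by apply: eq_bigr => i _; rewrite exprS.
Qed.

End GeometricSum.

Lemma sigma_pfactorM s p c n : prime p -> ~~ (p %| n)%N ->
  sigma s (p ^ c * n) = geom ((p%:Q) ^ s) c * sigma s n.
Proof.
move=> pp pn; rewrite [LHS](divisor_sum_pfactorM _ _ pp pn) big_distrl.
apply: eq_bigr => b _; rewrite /divisor_sum big_distrr; apply: eq_bigr => d _.
by rewrite PoszM intrM expfzMl -pmulrn natrX exprnP exprzAC -exprnP pmulrn.
Qed.

Lemma g_divisor_sum k M : (0 < M)%N ->
  g k M = divisor_sum M (fun d =>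
    if (d ^ 2 %| M)%N then (moebius d)%:~R * sigma (k - 1) (M %/ d ^ 2) else 0).
Proof.
move=> M0; rewrite /g /divisor_sum !(big_mkcond (fun d => _ %| M)%N) /=.
apply: eq_bigr => d _; case dM: (d ^ 2 %| M)%N; last by case: ifP.
by rewrite (dvdn_trans (dvdn_mulr d (dvdnn d)) dM).
Qed.

(* g_k(p^a), with q standing for p^(k-1). *)
Definition local_g (p : nat) (q : rat) (a : nat) : rat :=
  \sum_(b < a.+1)
    (if (b * 2 <= a)%N then (moebius (p ^ b))%:~R * geom q (a - b * 2) else 0).

Lemma g_pfactorM k p a n : prime p -> ~~ (p %| n)%N ->
  g k (p ^ a * n) = local_g p ((p%:Q) ^ (k - 1)) a * g k n.
Proof.
move=> pp pn; have n0 := ndvdn_gt0 pn; have p0 := prime_gt0 pp.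
rewrite !g_divisor_sum ?muln_gt0 ?expn_gt0 ?p0 ?n0 //.
rewrite divisor_sum_pfactorM // /local_g big_distrl; apply: eq_bigr => b _.
rewrite /divisor_sum big_distrr; apply: eq_bigr => e en.
have e0 : (0 < e)%N := dvdn_gt0 n0 en.
have pe : ~~ (p %| e)%N by apply: contra pn => /dvdn_trans; apply.
have [cpn cpe] : coprime p n /\ coprime p e by rewrite !prime_coprime.
rewrite expnMn -expnM Gauss_dvd ?coprimeXl ?coprimeXr //.
rewrite Gauss_dvdl ?coprimeXl // dvdn_Pexp2l ?prime_gt1 //.
rewrite Gauss_dvdr ?coprimeXl ?coprimeXr 1?coprime_sym //.
have [le_2b_a|] := boolP (b * 2 <= a)%N; last by rewrite /= mul0r.
case e2n: (e ^ 2 %| n)%N => /=; last by rewrite mulr0.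
have pne : ~~ (p %| n %/ e ^ 2)%N.
  by apply: contra pn => /dvdn_trans; apply; rewrite -{2}(divnK e2n) dvdn_mulr.
have -> : (p ^ a * n %/ (p ^ (b * 2) * e ^ 2))%N = (p ^ (a - b * 2) * (n %/ e ^ 2))%N.
  rewrite -{1}(subnK le_2b_a) expnD -{1}(divnK e2n) mulnACA mulnK //.
  by rewrite muln_gt0 !expn_gt0 p0 e0.
by rewrite sigma_pfactorM // moebius_pfactorM // intrM mulrACA.
Qed.

Lemma local_g0 p q : local_g p q 0 = 1.
Proof. by rewrite /local_g big_ord_recl big_ord0 /= mul1r addr0 geom0. Qed.

Lemma local_g1 p q : local_g p q 1 = geom q 1.
Proof. by rewrite /local_g !big_ord_recl big_ord0 /= mul1r !addr0. Qed.

Lemma local_gSS p q c : prime p ->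
  local_g p q c.+2 = geom q c.+2 - geom q c.
Proof.
move=> pp; rewrite /local_g 2!big_ord_recl big1 => [|i _].
  rewrite /= mul1r addr0 expn1 (moebius_prime pp) subn0 rmorphN1 mulN1r.
  by congr (_ - geom q _); rewrite /bump; lia.
rewrite /= (moebius_sqr_dvd pp) ?expn_gt0 ?prime_gt0 ?dvdn_exp2l //.
by rewrite mul0r; case: ifP.
Qed.

Lemma local_gS p q a : prime p ->
  local_g p q a.+1 = (if a == 0%N then q + 1 else q) * local_g p q a.
Proof.
move=> pp; case: a => [|[|c]] /=.
- by rewrite local_g1 local_g0 geomS geom0; ring.
- by rewrite local_gSS // local_g1 !geomS geom0; ring.
- by rewrite !local_gSS // !geomS; ring.
Qed.

Theorem lemma4p1 (k : int) (m p : nat) (hm : (0 < m)%N) (hp : prime p) :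
  (~~ (p %| m)%N -> g k (m * p) = ((p%:Q) ^ (k - 1) + 1) * g k m) /\
  ((p %| m)%N -> g k (m * p) = (p%:Q) ^ (k - 1) * g k m).
Proof.
have [n cpn mE] := pfactor_coprime hp hm.
have pn : ~~ (p %| n)%N by rewrite -prime_coprime.
set q := (p%:Q) ^ (k - 1); set a := logn p m in mE.
have gm : g k m = local_g p q a * g k n by rewrite mE mulnC g_pfactorM.
have gmp : g k (m * p) = local_g p q a.+1 * g k n.
  by rewrite mE -mulnA -expnSr mulnC g_pfactorM.
have a0 : (a == 0%N) = ~~ (p %| m)%N.
  by rewrite -leqn0 leqNgt logn_gt0 mem_primes hp hm.
by rewrite gmp local_gS // -mulrA -gm a0; split=> [-> | ->].
Qed.
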